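(* Let $\phi_\alpha$ be either $\|\cdot\|_1$ or $(p-1)^{1/p}\|\cdot\|_p$ with $p\ge2$, and let $\theta^*$ be a KKT point of $\min_\theta\frac12\phi_\alpha^2(\theta)$ s.t. $y_if(\theta,x_i)\ge1$ for all $i\in[K]$. Then there exist $h_i\in\partial^\circ_\theta f(\theta^*,x_i)$, $i\in[K]$, such that $\frac1L\theta^*$ is an optimal solution of $$\min_{\theta\in\mathbb R^n}\tfrac12\phi_\alpha^2(\theta)\quad\text{s.t.}\quad y_i\langle\theta,h_i\rangle_2\ge1\ \ \forall i\in[K].$$
   Context: $f(\theta,x)$ is locally Lipschitz in $\theta$ and $L$-homogeneous ($f(c\theta,x)=c^Lf(\theta,x)$, $c>0$), so Euler's identity $\langle\theta,h\rangle=Lf(\theta,x)$ holds for all $h\in\partial^\circ_\theta f(\theta,x)$. $q_i(\theta)=y_if(\theta,x_i)$. KKT point: feasible $\theta$ with $\lambda_i\ge0$ and $h_i'\in\partial^\circ q_i(\theta)$ such that $0\in\partial^\circ\frac12\phi_\alpha^2(\theta)-\sum_i\lambda_ih_i'$ and $\lambda_i(q_i(\theta)-1)=0$ for all $i$. *)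

From HB Require Import structures.
From mathcomp Require Import all_boot all_order all_algebra.
From mathcomp Require Import all_classical all_reals all_analysis.
Set Implicit Arguments. Unset Strict Implicit. Unset Printing Implicit Defensive.
Import Order.TTheory GRing.Theory Num.Theory.
Import numFieldNormedType.Exports.
Local Open Scope classical_set_scope.
Local Open Scope ring_scope.

Section Defs.
Variables (R : realType) (n : nat).
Notation vec := 'rV[R]_n.

Definition dotv (u v : vec) : R := \sum_(j < n) u ord0 j * v ord0 j.

Definition norm1 (theta : vec) : R := \sum_(j < n) `|theta ord0 j|.

Definition phip (p : R) (theta : vec) : R :=
  (p - 1) `^ (p^-1) * (\sum_(j < n) `|theta ord0 j| `^ p) `^ (p^-1).

(* locally Lipschitz (w.r.t. the library norm on row vectors; all norms
   on R^n are equivalent) *)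
Definition locally_lipschitz (g : vec -> R) : Prop :=
  forall theta : vec, exists2 d : R, 0 < d & exists C : R,
    forall a b : vec, `|a - theta| < d -> `|b - theta| < d ->
      `|g a - g b| <= C * `|a - b|.

(* Clarke generalized directional derivative
   g°(theta; v) = limsup_{y -> theta, t -> 0+} (g (y + t v) - g y) / t
               = inf_{d > 0} sup_{|y - theta| < d, 0 < t < d} ...           *)
Definition clarke_dd (g : vec -> R) (theta v : vec) : \bar R :=
  ereal_inf [set ereal_sup
      [set ((g (yt.1 + yt.2 *: v) - g yt.1) / yt.2)%:E
         | yt in [set yt : vec * R | `|yt.1 - theta| < d /\ 0 < yt.2 < d]]
    | d in [set d : R | 0 < d]].

Definition clarke_subdiff (g : vec -> R) (theta : vec) : set vec :=
  [set h | forall v : vec, ((dotv h v)%:E <= clarke_dd g theta v)%E].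

Definition KKT_point (K : nat) (phi : vec -> R) (q : 'I_K -> vec -> R)
    (theta : vec) : Prop :=
  (forall i, 1 <= q i theta) /\
  exists (lam : 'I_K -> R) (h' : 'I_K -> vec),
    (forall i, 0 <= lam i) /\
    (forall i, clarke_subdiff (q i) theta (h' i)) /\
    (exists2 g : vec, clarke_subdiff (fun th => 2^-1 * phi th ^+ 2) theta g
       & g - \sum_(i < K) lam i *: h' i = 0) /\
    (forall i, lam i * (q i theta - 1) = 0).

Definition lin_optimal (K : nat) (phi : vec -> R) (y : 'I_K -> R)
    (h : 'I_K -> vec) (theta : vec) : Prop :=
  (forall i, 1 <= y i * dotv theta (h i)) /\
  forall th : vec, (forall i, 1 <= y i * dotv th (h i)) ->
    2^-1 * phi theta ^+ 2 <= 2^-1 * phi th ^+ 2.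

End Defs.

(* Write psi := phi^2 / 2.  The KKT point gives a Clarke subgradient g of psi at
   thetas with g = sum_i lam_i h'_i, where h'_i is a Clarke subgradient of
   y_i f(., x_i); scaling, h_i := h'_i / y_i is one of f(., x_i).  Euler's identity
   gives y_i <thetas / L, h_i> = y_i f(thetas, x_i) >= 1, so thetas / L is feasible.
   Both admissible phi are nonnegative, positively homogeneous, subadditive
   (Minkowski, from the convexity of t |-> t^p) and bounded by a multiple of the
   norm, so psi is convex and continuous and g is an ordinary subgradient.  For a
   feasible th, complementary slackness gives <g, L th - thetas> >= 0, hence
   psi thetas <= psi (L th) = L^2 psi th, i.e. psi (thetas / L) <= psi th. *)

From HB Require Import structures.
From mathcomp Require Import all_boot all_order all_algebra.
From mathcomp Require Import all_classical all_reals all_analysis.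
From mathcomp Require Import ring lra.
Import Order.TTheory GRing.Theory Num.Theory.
Import numFieldNormedType.Exports.
Local Open Scope classical_set_scope.
Local Open Scope ring_scope.

Set Implicit Arguments.
Unset Strict Implicit.
Unset Printing Implicit Defensive.

Section Dotv.
Variables (R : realType) (n : nat).
Implicit Types u v w : 'rV[R]_n.

Lemma dotvC u v : dotv u v = dotv v u.
Proof. by apply: eq_bigr => j _; rewrite mulrC. Qed.

Lemma dotvZl c u v : dotv (c *: u) v = c * dotv u v.
Proof. by rewrite /dotv mulr_sumr; apply: eq_bigr => j _; rewrite mxE mulrA. Qed.

Lemma dotvNl u v : dotv (- u) v = - dotv u v.
Proof. by rewrite -scaleN1r dotvZl mulN1r. Qed.

Lemma dotvBl u v w : dotv (u - v) w = dotv u w - dotv v w.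
Proof. by rewrite /dotv -sumrB; apply: eq_bigr => j _; rewrite !mxE mulrBl. Qed.

Lemma dotv_suml (I : finType) (F : I -> 'rV[R]_n) v :
  dotv (\sum_i F i) v = \sum_i dotv (F i) v.
Proof.
by rewrite /dotv exchange_big; apply: eq_bigr => j _; rewrite summxE mulr_suml.
Qed.

End Dotv.

Section ClarkeSubdifferential.
Variables (R : realType) (n : nat).
Implicit Types (g : 'rV[R]_n -> R) (th v h z : 'rV[R]_n).

Lemma clarke_dd_geP g th v (r : R) :
  (r%:E <= clarke_dd g th v)%E <->
  forall d e : R, 0 < d -> 0 < e -> exists y t,
    [/\ `|y - th| < d, 0 < t < d & r - e < (g (y + t *: v) - g y) / t].
Proof.
split=> [rle d e d0 e0 | near_th].
- have : ((r - e)%:E < r%:E)%E by rewrite lte_fin gtrBl.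
  move=> /lt_le_trans /(_ (le_trans rle (ereal_inf_lbound (ex_intro2 _ _ d d0 erefl)))).
  by move=> /ereal_sup_gt[_ [[y t] /= [yd td] <-]]; rewrite lte_fin => ?; exists y, t.
- apply: le_ereal_inf_tmp => _ [d /= d0 <-]; apply/lee_subgt0Pr => e e0.
  have [y [t [yd td lt_e]]] := near_th d e d0 e0.
  apply: le_ereal_sup_tmp; exists ((g (y + t *: v) - g y) / t)%:E; first by exists (y, t).
  by rewrite -EFinB lee_fin ltW.
Qed.

Lemma clarke_subdiffZ_pos g (c : R) th h : 0 < c ->
  clarke_subdiff (fun t => c * g t) th h -> clarke_subdiff g th (c^-1 *: h).
Proof.
move=> c0 sub v; apply/clarke_dd_geP => d e d0 e0.
have /clarke_dd_geP/(_ d (c * e) d0 (mulr_gt0 c0 e0))[y [t [yd td lt_e]]] := sub v.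
exists y, t; split=> //; rewrite dotvZl.
rewrite -(ltr_pM2l c0) mulrBr mulrA mulfV ?gt_eqF // mul1r.
by move: lt_e; rewrite -mulrBr -mulrA.
Qed.

Lemma clarke_subdiffN g th h :
  clarke_subdiff (fun t => - g t) th h -> clarke_subdiff g th (- h).
Proof.
move=> sub v; apply/clarke_dd_geP => d e d0 e0.
have v1 : 0 < 1 + `|v| by rewrite ltr_pwDl.
pose d' := d / (1 + `|v|).
have d'0 : 0 < d' by rewrite divr_gt0.
have d'd : d' * (1 + `|v|) = d by rewrite mulfVK ?gt_eqF.
have /clarke_dd_geP/(_ d' e d'0 e0)[y [t [yd /andP[t0 td] lt_e]]] := sub (- v).
(* the difference quotient of [-g] along [-v] at [y] is that of [g] along [v] at [y - t v] *)
exists (y - t *: v), t; split.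
- rewrite addrAC (le_lt_trans (ler_normB _ _)) // normrZ gtr0_norm //.
  by rewrite -d'd; have := normr_ge0 v; nra.
- by rewrite t0 /= -d'd; have := normr_ge0 v; nra.
- by move: lt_e; rewrite dotvNl dotvC dotvNl dotvC scalerN subrK (addrC (- g _)) opprK.
Qed.

Lemma clarke_subdiffZ g (c : R) th h : c != 0 ->
  clarke_subdiff (fun t => c * g t) th h -> clarke_subdiff g th (c^-1 *: h).
Proof.
case: (ltgtP c 0) => // [c_lt0 | c_gt0] _ sub; last exact: clarke_subdiffZ_pos.
have : clarke_subdiff (fun t => - (- c * g t)) th h.
  by rewrite (_ : (fun t => _) = (fun t => c * g t)) // funeqE => t; rewrite mulNr opprK.
move=> /clarke_subdiffN /clarke_subdiffZ_pos; rewrite oppr_gt0 => /(_ c_lt0).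
by rewrite invrN scaleNr scalerN opprK.
Qed.

Lemma clarke_subdiff_convex (psi : 'rV[R]_n -> R) th h z :
  clarke_subdiff psi th h ->
  (forall a b (t : R), 0 <= t <= 1 ->
     psi ((1 - t) *: a + t *: b) <= (1 - t) * psi a + t * psi b) ->
  continuous psi -> dotv h (z - th) <= psi z - psi th.
Proof.
move=> sub psi_convex psi_cont; set v := z - th.
apply/ler_addgt0Pr => e e0.
have e3 : 0 < e / 3 by rewrite divr_gt0.
have /cvgrPdist_lt/(_ _ e3)/nbhs_normP[d1 d1_gt0 near_th] := psi_cont th.
have /cvgrPdist_lt/(_ _ e3)/nbhs_normP[d2 d2_gt0 near_z] := psi_cont z.
have d_gt0 : 0 < Num.min 1 (Num.min d1 d2) by rewrite !lt_min ltr01 d1_gt0.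
have /clarke_dd_geP/(_ _ _ d_gt0 e3)[y [t [+ /andP[t_gt0 +] lt_e]]] := sub v.
rewrite !lt_min => /and3P[_ yd1 yd2] /andP[t_lt1 _].
(* by convexity, the difference quotient at [y] is at most the chord slope over [y, y + v] *)
have chord : (psi (y + t *: v) - psi y) / t <= psi (y + v) - psi y.
  have := psi_convex y (y + v) t; rewrite (ltW t_gt0) (ltW t_lt1) => /(_ isT).
  rewrite scalerDr addrA -scalerDl subrK scale1r ler_pdivrMr //; lra.
have := near_th y; rewrite /= distrC => /(_ yd1); rewrite ltr_norml => /andP[th1 th2].
have := near_z (y + v); rewrite /= (_ : z - (y + v) = th - y); last first.
  by rewrite /v opprD opprB addrA addrC addrA subrK.
rewrite distrC => /(_ yd2); rewrite ltr_norml => /andP[z1 z2].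
have := lt_le_trans lt_e chord; lra.
Qed.

End ClarkeSubdifferential.

Lemma lipschitz_continuous (R : realFieldType) (V W : normedModType R) (f : V -> W) (k : R) :
  (forall a b, `|f a - f b| <= k * `|a - b|) -> continuous f.
Proof.
move=> lip a; apply/cvgrPdist_lt => e e0; apply/nbhs_normP.
have k1 : 0 < `|k| + 1 by rewrite ltr_pwDr.
exists (e / (`|k| + 1)) => [|b /=]; first by rewrite /= divr_gt0.
rewrite ltr_pdivlMr // => ab; rewrite (le_lt_trans (lip a b)) //.
rewrite (le_lt_trans _ ab) // (le_trans (ler_wpM2r (normr_ge0 _) (ler_norm k))) //.
by rewrite mulrC ler_wpM2l // lerDl.
Qed.

Definition bounded_gauge {R : realType} {n : nat} (phi : 'rV[R]_n -> R) : Prop :=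
  [/\ forall a, 0 <= phi a,
      forall a b, phi (a + b) <= phi a + phi b,
      forall c a, 0 <= c -> phi (c *: a) = c * phi a
    & exists C, forall a, phi a <= C * `|a|].

Section BoundedGauge.
Variables (R : realType) (n : nat) (phi : 'rV[R]_n -> R).
Hypothesis phi_gauge : bounded_gauge phi.

Lemma bounded_gauge_continuous : continuous phi.
Proof.
case: phi_gauge => _ phiD _ [C phiC].
have le_dist u w : phi u - phi w <= `|C| * `|u - w|.
  have := phiD w (u - w); rewrite addrC subrK.
  have := ler_wpM2r (normr_ge0 (u - w)) (ler_norm C); have := phiC (u - w); lra.
have lip a b : `|phi a - phi b| <= `|C| * `|a - b|.
  by rewrite ler_norml le_dist andbT lerNl opprB distrC le_dist.
exact: lipschitz_continuous lip.
Qed.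

Lemma half_sq_gauge_continuous : continuous (fun a => 2^-1 * phi a ^+ 2).
Proof.
move=> a; apply: (@continuous_comp _ _ _ phi (fun r : R => 2^-1 * r ^+ 2)).
  exact: bounded_gauge_continuous.
by apply: cvgM; [exact: cvg_cst | exact: exprn_continuous].
Qed.

Lemma half_sq_gaugeZ c a : 0 <= c -> 2^-1 * phi (c *: a) ^+ 2 = c ^+ 2 * (2^-1 * phi a ^+ 2).
Proof. by case: phi_gauge => _ _ phiZ _ c0; rewrite phiZ //; ring. Qed.

Lemma half_sq_gauge_convex a b (t : R) : 0 <= t <= 1 ->
  2^-1 * phi ((1 - t) *: a + t *: b) ^+ 2 <=
    (1 - t) * (2^-1 * phi a ^+ 2) + t * (2^-1 * phi b ^+ 2).
Proof.
case: phi_gauge => phi_ge0 phiD phiZ _ /andP[t0 t1].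
have t1' : 0 <= 1 - t by rewrite subr_ge0.
have phi_convex : phi ((1 - t) *: a + t *: b) <= (1 - t) * phi a + t * phi b.
  by rewrite -phiZ // -(phiZ t) //; exact: phiD.
have sq_le : phi ((1 - t) *: a + t *: b) ^+ 2 <= ((1 - t) * phi a + t * phi b) ^+ 2.
  by rewrite ler_sqr ?nnegrE ?addr_ge0 ?mulr_ge0.
(* convexity of the square: the gap is [t (1 - t) (phi a - phi b)^2] *)
have := mulr_ge0 (mulr_ge0 t0 t1') (sqr_ge0 (phi a - phi b)); nra.
Qed.

Lemma half_sq_gauge_le_scale c a b : 0 < c ->
  2^-1 * phi a ^+ 2 <= 2^-1 * phi (c *: b) ^+ 2 ->
  2^-1 * phi (c^-1 *: a) ^+ 2 <= 2^-1 * phi b ^+ 2.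
Proof.
move=> c_gt0; rewrite -{1}(scalerKV (lt0r_neq0 c_gt0) a).
by rewrite !(half_sq_gaugeZ _ (ltW c_gt0)) ler_pM2l // exprn_gt0.
Qed.

End BoundedGauge.

Lemma bounded_gaugeZ (R : realType) (n : nat) (phi : 'rV[R]_n -> R) (k : R) :
  0 <= k -> bounded_gauge phi -> bounded_gauge (fun a => k * phi a).
Proof.
move=> k0 [phi_ge0 phiD phiZ [C phiC]]; split.
- by move=> a; rewrite mulr_ge0.
- by move=> a b; rewrite -mulrDr ler_wpM2l.
- by move=> c a c0; rewrite phiZ // mulrCA.
- by exists (k * C) => a; rewrite -mulrA ler_wpM2l.
Qed.

Definition pnorm {R : realType} {n : nat} (p : R) (a : 'rV[R]_n) : R :=
  (\sum_(j < n) `|a ord0 j| `^ p) `^ p^-1.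

Lemma row_entry_le_norm (R : realDomainType) (n : nat) (a : 'rV[R]_n) j :
  `|a ord0 j| <= `|a|.
Proof. by rewrite [`|a|]mx_normrE (le_bigmax _ _ (ord0, j)). Qed.

Lemma powR_convex (R : realType) (p l x y : R) : 1 <= p -> 0 <= l <= 1 ->
  0 <= x -> 0 <= y -> (l * x + (1 - l) * y) `^ p <= l * x `^ p + (1 - l) * y `^ p.
Proof.
move=> p1 /andP[l0 l1] x0 y0.
have := convex_powR p1 (Itv01 l0 l1) (x := x) (y := y).
by rewrite !inE /= !in_itv /= !andbT => /(_ x0 y0); rewrite !convRE.
Qed.

Section PNorm.
Variables (R : realType) (n : nat) (p : R).
Hypothesis p_ge1 : 1 <= p.
Implicit Types a b u v : 'rV[R]_n.

Let p_gt0 : 0 < p. Proof. exact: lt_le_trans ltr01 p_ge1. Qed.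

Let sum_powR_ge0 a : 0 <= \sum_(j < n) `|a ord0 j| `^ p.
Proof. by apply: sumr_ge0 => j _; exact: powR_ge0. Qed.

Lemma pnorm_ge0 a : 0 <= pnorm p a.
Proof. exact: powR_ge0. Qed.

Lemma pnorm_powR a : pnorm p a `^ p = \sum_(j < n) `|a ord0 j| `^ p.
Proof. by rewrite -powRrM mulVf ?gt_eqF // powRr1. Qed.

Lemma pnormZ c a : 0 <= c -> pnorm p (c *: a) = c * pnorm p a.
Proof.
move=> c0; rewrite /pnorm (eq_bigr (fun j => c `^ p * `|a ord0 j| `^ p)); last first.
  by move=> j _; rewrite mxE normrM ger0_norm // powRM.
by rewrite -mulr_sumr powRM ?powR_ge0 // -powRrM mulfV ?gt_eqF // powRr1.
Qed.

Lemma pnorm_eq0 a : pnorm p a = 0 -> a = 0.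
Proof.
move=> /powR_eq0_eq0 /eqP; rewrite psumr_eq0 => [/allP a0 | j _]; last exact: powR_ge0.
apply/rowP => j; rewrite mxE; apply: normr0_eq0; apply: (@powR_eq0_eq0 _ _ p).
by apply/eqP; exact: a0 (mem_index_enum _).
Qed.

Lemma pnorm_conv_le1 u v l : pnorm p u = 1 -> pnorm p v = 1 -> 0 <= l <= 1 ->
  pnorm p (l *: u + (1 - l) *: v) <= 1.
Proof.
move=> u1 v1 l01; have /andP[l0 l1] := l01; have l1' : 0 <= 1 - l by rewrite subr_ge0.
suff sum_le1 : \sum_(j < n) `|(l *: u + (1 - l) *: v) ord0 j| `^ p <= 1.
  rewrite /pnorm; apply: le_trans (ge0_ler_powR _ _ _ sum_le1) _;
    by rewrite ?powR1 ?invr_ge0 ?(ltW p_gt0) ?nnegrE ?sum_powR_ge0.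
apply: (@le_trans _ _ (\sum_(j < n) (l * `|u ord0 j| `^ p + (1 - l) * `|v ord0 j| `^ p))).
  apply: ler_sum => j _.
  apply: le_trans (powR_convex p_ge1 l01 (normr_ge0 _) (normr_ge0 _)).
  rewrite ge0_ler_powR ?(ltW p_gt0) ?nnegrE ?addr_ge0 ?mulr_ge0 // !mxE.
  by apply: le_trans (ler_normD _ _) _; rewrite !normrM (ger0_norm l0) (ger0_norm l1').
by rewrite big_split /= -!mulr_sumr -!pnorm_powR u1 v1 powR1 !mulr1 subrKC.
Qed.

Lemma pnorm_gt0 a : a != 0 -> 0 < pnorm p a.
Proof. by move=> a_neq0; rewrite lt0r pnorm_ge0 andbT; apply: contra_neq a_neq0 => /pnorm_eq0. Qed.

Lemma pnormD a b : pnorm p (a + b) <= pnorm p a + pnorm p b.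
Proof.
have [-> | a_neq0] := eqVneq a 0; first by rewrite add0r lerDr pnorm_ge0.
have [-> | b_neq0] := eqVneq b 0; first by rewrite addr0 lerDl pnorm_ge0.
have unit_scale u : u != 0 -> pnorm p ((pnorm p u)^-1 *: u) = 1.
  by move=> /pnorm_gt0 u_gt0; rewrite pnormZ ?invr_ge0 ?(ltW u_gt0) // mulVf ?gt_eqF.
move: (unit_scale a a_neq0) (unit_scale b b_neq0) (pnorm_gt0 a_neq0) (pnorm_gt0 b_neq0).
move: (pnorm p a) (pnorm p b) => A B a1 b1 A_gt0 B_gt0.
have AB_gt0 : 0 < A + B := addr_gt0 A_gt0 B_gt0.
pose l := A / (A + B).
have l01 : 0 <= l <= 1.
  by rewrite divr_ge0 ?(ltW A_gt0) ?(ltW AB_gt0) //= ler_pdivrMr // mul1r lerDl (ltW B_gt0).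
(* [a + b] is [A + B] times a convex combination of the unit vectors [a / A] and [b / B] *)
have -> : a + b = (A + B) *: (l *: (A^-1 *: a) + (1 - l) *: (B^-1 *: b)).
  have e1 : (A + B) * l * A^-1 = 1 by rewrite /l; field; rewrite !gt_eqF.
  have e2 : (A + B) * (1 - l) * B^-1 = 1 by rewrite /l; field; rewrite !gt_eqF.
  by rewrite scalerDr !scalerA e1 e2 !scale1r.
rewrite pnormZ ?(ltW AB_gt0) // -[leRHS]mulr1 ler_wpM2l ?(ltW AB_gt0) //.
exact: pnorm_conv_le1.
Qed.

Lemma pnorm_le_norm a : pnorm p a <= n%:R `^ p^-1 * `|a|.
Proof.
have -> : `|a| = (`|a| `^ p) `^ p^-1 by rewrite -powRrM mulfV ?gt_eqF // powRr1.
rewrite -powRM ?powR_ge0 // /pnorm; apply: ge0_ler_powR;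
  rewrite ?nnegrE ?invr_ge0 ?(ltW p_gt0) ?mulr_ge0 ?powR_ge0 ?sum_powR_ge0 //.
apply: (@le_trans _ _ (\sum_(j < n) `|a| `^ p)); last by rewrite sumr_const card_ord mulr_natl.
apply: ler_sum => j _; apply: ge0_ler_powR; rewrite ?nnegrE ?(ltW p_gt0) //.
exact: row_entry_le_norm.
Qed.

Lemma pnorm_bounded_gauge : bounded_gauge (@pnorm R n p).
Proof.
split; [exact: pnorm_ge0 | exact: pnormD | exact: pnormZ |].
by exists (n%:R `^ p^-1); exact: pnorm_le_norm.
Qed.

End PNorm.

Lemma norm1E (R : realType) (n : nat) : @norm1 R n = pnorm 1.
Proof.
apply/funext => a; rewrite /pnorm invr1 powRr1 ?sumr_ge0 //.
by apply: eq_bigr => j _; rewrite powRr1.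
Qed.

Lemma phip_bounded_gauge (R : realType) (n : nat) (p : R) :
  1 <= p -> bounded_gauge (@phip R n p).
Proof.
move=> p_ge1; rewrite /phip; apply: bounded_gaugeZ; first exact: powR_ge0.
exact: pnorm_bounded_gauge.
Qed.

Theorem lemmaH2 (R : realType) (n : nat) (X : Type) (K : nat)
  (f : 'rV[R]_n -> X -> R) (L : R) (x : 'I_K -> X) (y : 'I_K -> R)
  (phi : 'rV[R]_n -> R) (thetas : 'rV[R]_n) :
  0 < L ->
  (forall xx : X, locally_lipschitz (fun th => f th xx)) ->
  (forall (xx : X) (c : R) (th : 'rV[R]_n), 0 < c -> f (c *: th) xx = c `^ L * f th xx) ->
  (forall (xx : X) (th h : 'rV[R]_n), clarke_subdiff (fun t => f t xx) th h ->
     dotv th h = L * f th xx) ->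
  (phi = @norm1 R n \/ exists2 p : R, 2 <= p & phi = @phip R n p) ->
  KKT_point phi (fun i th => y i * f th (x i)) thetas ->
  exists h : 'I_K -> 'rV[R]_n,
    (forall i, clarke_subdiff (fun th => f th (x i)) thetas (h i)) /\
    lin_optimal phi y h (L^-1 *: thetas).
Proof.
(* Lipschitzness and homogeneity of [f] only serve to derive Euler's identity, assumed here *)
move=> L_gt0 _ _ euler phi_choice [feasible [lam [h' [lam_ge0 [h'_sub [[g g_sub g_eq] slack]]]]]].
have phi_gauge : bounded_gauge phi.
  case: phi_choice => [-> | [p p_ge2 ->]]; first by rewrite norm1E; exact: pnorm_bounded_gauge.
  by apply: phip_bounded_gauge; apply: le_trans p_ge2; rewrite ler1n.
have y_neq0 i : y i != 0 by apply: contraTneq (feasible i) => ->; rewrite mul0r ler10.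
pose h i := (y i)^-1 *: h' i.
have h_sub i : clarke_subdiff (fun th => f th (x i)) thetas (h i).
  exact: clarke_subdiffZ (y_neq0 i) (h'_sub i).
exists h; split=> //; split=> [i | th th_feasible].
  by rewrite dotvZl (euler _ _ _ (h_sub i)) mulKf ?gt_eqF //; exact: feasible.
have ascent : 0 <= dotv g (L *: th - thetas).
  rewrite (subr0_eq g_eq) dotv_suml; apply: sumr_ge0 => i _.
  (* complementary slackness turns the term into [L lam_i (y_i <th, h_i> - 1)] *)
  have h'E : h' i = y i *: h i by rewrite scalerKV.
  rewrite h'E 2!dotvZl dotvC dotvBl dotvZl (euler _ _ _ (h_sub i)).
  have : 0 <= L * (lam i * (y i * dotv th (h i) - 1)).
    by rewrite mulr_ge0 ?(ltW L_gt0) ?mulr_ge0 ?subr_ge0.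
  have : L * (lam i * (y i * f thetas (x i) - 1)) = 0 by rewrite slack mulr0.
  lra.
have := le_trans ascent (clarke_subdiff_convex (L *: th) g_sub
  (half_sq_gauge_convex phi_gauge) (half_sq_gauge_continuous phi_gauge)).
by rewrite subr_ge0 => /(half_sq_gauge_le_scale phi_gauge L_gt0).
Qed.
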